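(* Let $c>1$ and let $m\ge cn$. Then there exists a constant $d>0$ such that, for all sufficiently large $n$ and every fixed matrix $\mathbf B\in\mathbb{Z}_2^{m\times 2n}$, $H(\mathbf B\mathbf A)\le(1-d)mn$, where $\mathbf A\in\mathbb{Z}_2^{2n\times n}$ is a uniformly random full-rank isotropic matrix and $H$ denotes Shannon entropy (in bits).
   Context: Symplectic inner product on $\mathbb{Z}_2^{2n}$: $(\mathbf a,\mathbf b)\odot(\mathbf a',\mathbf b')=\mathbf a\cdot\mathbf b'+\mathbf a'\cdot\mathbf b\pmod2$. A uniformly random full-rank isotropic matrix in $\mathbb{Z}_2^{2n\times n}$ is uniform among matrices of column rank $n$ whose columns are pairwise symplectically orthogonal. *)

From Stdlib Require Import Reals.
From HB Require Import structures.
From mathcomp Require Import all_boot all_order all_algebra.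
From mathcomp Require Import Rstruct.
Set Implicit Arguments. Unset Strict Implicit. Unset Printing Implicit Defensive.
Import GRing.Theory Num.Theory.
Local Open Scope ring_scope.

(* Z_2 as the prime field 'F_2. Vectors of Z_2^{2n} are column vectors
   indexed by 'I_(n + n): the first n coordinates are a, the last n are b. *)

Definition sympl (n : nat) (u v : 'cV['F_2]_(n + n)) : 'F_2 :=
  \sum_(i < n) (u (lshift n i) 0 * v (rshift n i) 0
               + v (lshift n i) 0 * u (rshift n i) 0).

Definition isotropic (n : nat) (A : 'M['F_2]_(n + n, n)) : bool :=
  [forall i : 'I_n, forall j : 'I_n, sympl (col i A) (col j A) == 0].

Definition IsoFR (n : nat) : {set 'M['F_2]_(n + n, n)} :=
  [set A | (\rank A == n) && isotropic A].

Definition prob_BA (m n : nat) (B : 'M['F_2]_(m, n + n)) (M : 'M['F_2]_(m, n)) : R :=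
  (#|[set A in IsoFR n | B *m A == M]|%:R / #|IsoFR n|%:R)%R.

Definition log2 (x : R) : R := (ln x / ln 2)%R.

Definition entropy_BA (m n : nat) (B : 'M['F_2]_(m, n + n)) : R :=
  \sum_(M : 'M['F_2]_(m, n))
     (if prob_BA B M == 0 then 0 else - (prob_BA B M * log2 (prob_BA B M))).

From Stdlib Require Import Reals.
From HB Require Import structures.
From mathcomp Require Import all_boot all_order all_algebra.
From mathcomp Require Import Rstruct.
From mathcomp Require Import zify ring lra.

(* The entropy of [B *m A] is at most [log2] of the number of values it takes.
   If [\rank B <= (1 - d) m], the columns of [B *m A] lie in the column space of
   [B], leaving at most [2 ^ (n * \rank B)] values.  Otherwise [y := \rank B - n]
   is of order [n].  The left annihilator of a Lagrangian [A] is the isotropic row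
   space of [A^T J], so every [T] with [T *m (B *m A) = 0] is isotropic for the
   form [Q := B J B^T], whose rank is at least [2 y].  Double counting pairs
   [(B *m A, T)] with [T] row-free with [y] rows, against the roughly
   [2 ^ (y m - y^2 / 2)] such [Q]-isotropic [T], bounds the number of values of
   [B *m A] by [2 ^ (n m - y^2 / 2 + O(y))]. *)
Set Implicit Arguments. Unset Strict Implicit. Unset Printing Implicit Defensive.
Import Order.TTheory GRing.Theory Num.Theory.
Local Open Scope ring_scope.

Section RankColMx.
Variable F : fieldType.

Lemma mxrank_col_mx_sub m n (v : 'rV[F]_n) (V : 'M[F]_(m, n)) :
  (v <= V)%MS -> \rank (col_mx v V) = \rank V.
Proof. by move=> svV; rewrite -addsmxE (addsmx_idPr svV). Qed.

Lemma mxrank_col_mx_nsub m n (v : 'rV[F]_n) (V : 'M[F]_(m, n)) :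
  ~~ (v <= V)%MS -> \rank (col_mx v V) = (\rank V).+1.
Proof.
move=> nsvV; rewrite -addsmxE; apply/eqP; rewrite eqn_leq; apply/andP; split.
  apply: leq_trans (mxrank_adds_leqif v V) _.
  exact: leq_add (rank_leq_row v) (leqnn _).
rewrite (ltn_leqif (mxrank_leqif_sup (addsmxSr v V))).
by apply: contra nsvV; rewrite addsmx_sub => /andP[].
Qed.

End RankColMx.

Lemma sum_nat_andb (T : finType) (b : bool) (P : pred T) :
  (\sum_x ((b && P x) : nat) = b * #|[set x | P x]|)%N.
Proof.
rewrite -sum1dep_card big_distrr [RHS]big_mkcond /=.
by apply: eq_bigr => x _; case: b; case: (P x).
Qed.

Section FinFieldCounting.
Variable F : finFieldType.
Local Notation q := #|F|.

Lemma sum_nat_col_mx l m (f : 'M[F]_(1 + l, m) -> nat) :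
  (\sum_W f W = \sum_(v : 'rV[F]_m) \sum_(V : 'M[F]_(l, m)) f (col_mx v V))%N.
Proof.
rewrite pair_big /= (reindex (fun vV => col_mx vV.1 vV.2)) //=.
exists (fun W => (usubmx W, dsubmx W)) => [[v V] _ | W _] /=.
  by rewrite col_mxKu col_mxKd.
by rewrite vsubmxK.
Qed.

Lemma card_submx k m p (U : 'M[F]_(p, m)) :
  #|[set X : 'M[F]_(k, m) | (X <= U)%MS]| = (q ^ (k * \rank U))%N.
Proof.
have row_base_inj : injective (fun Y : 'M[F]_(k, \rank U) => Y *m row_base U).
  exact: row_free_inj (row_base_free U).
have -> : [set X : 'M[F]_(k, m) | (X <= U)%MS] =
          [set Y *m row_base U | Y in [set: 'M[F]_(k, \rank U)]].
  apply/setP => X; rewrite inE; apply/idP/imsetP => [sXU | [Y _ ->]].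
    by exists (X *m pinvmx (row_base U)); rewrite ?inE // mulmxKpV ?eq_row_base.
  by rewrite -(eq_row_base U) submxMl.
by rewrite card_imset // cardsT card_mx.
Qed.

Lemma card_mulmx_eq0 m n p (T : 'M[F]_(p, m)) :
  #|[set M : 'M[F]_(m, n) | T *m M == 0]| = (q ^ (n * (m - \rank T)))%N.
Proof.
have -> : [set M : 'M[F]_(m, n) | T *m M == 0] =
          [set X^T | X in [set X : 'M[F]_(n, m) | (X <= kermx T^T)%MS]].
  apply/setP => M; rewrite inE; apply/idP/imsetP => [/eqP TM0 | [X]].
    by exists M^T; rewrite ?trmxK // inE sub_kermx -trmx_mul TM0 trmx0.
  rewrite inE sub_kermx => /eqP XT0 ->.
  by rewrite -(trmxK T) -trmx_mul XT0 trmx0.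
by rewrite card_imset ?card_submx ?mxrank_ker ?mxrank_tr //; exact: trmx_inj.
Qed.

Lemma card_submx_diff m p l (U : 'M[F]_(p, m)) (T : 'M[F]_(l, m)) :
  row_free T -> (T <= U)%MS -> (l < \rank U)%N ->
  (q ^ (\rank U).-1 <= #|[set v : 'rV[F]_m | (v <= U)%MS && ~~ (v <= T)%MS]|)%N.
Proof.
move=> freeT sTU ltlU.
have -> : [set v : 'rV[F]_m | (v <= U)%MS && ~~ (v <= T)%MS] =
          [set v | (v <= U)%MS] :\: [set v | (v <= T)%MS].
  by apply/setP => v; rewrite !inE andbC.
rewrite cardsD (setIidPr _); last first.
  by apply/subsetP => v; rewrite !inE => /submx_trans->.
rewrite !card_submx !mul1n (eqP freeT).
have q_gt1 := card_finNzRing_gt1 F.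
move: ltlU; case: (\rank U) => // r ltlr /=.
have le_lr : (q ^ l <= q ^ r)%N by rewrite leq_exp2l.
rewrite leq_subRL; last by rewrite (leq_trans le_lr) // leq_exp2l.
by rewrite expnS (leq_trans (leq_add le_lr (leqnn _))) // addnn -mul2n leq_mul2r q_gt1 orbT.
Qed.

Lemma card_row_free_submx m p (U : 'M[F]_(p, m)) l : (l <= \rank U)%N ->
  (q ^ (l * (\rank U).-1) <= #|[set T : 'M[F]_(l, m) | row_free T && (T <= U)%MS]|)%N.
Proof.
elim: l => [|l IHl] lelU.
  rewrite mul0n expn0 card_gt0; apply/set0Pn; exists 0.
  by rewrite inE sub0mx andbT /row_free mxrank0.
rewrite -sum1dep_card big_mkcond sum_nat_col_mx mulSn expnD mulnC.
apply: leq_trans (leq_mul (IHl (ltnW lelU)) (leqnn (q ^ (\rank U).-1))) _.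
rewrite -sum1dep_card big_mkcond big_distrl exchange_big /=.
apply: leq_sum => T _; case: ifP => [/andP[freeT sTU] | _]; last by [].
rewrite mul1n; apply: leq_trans (card_submx_diff freeT sTU lelU) _.
rewrite -sum1dep_card big_mkcond; apply: leq_sum => v _.
case: ifP => [/andP[sVU nsvT] | //].
rewrite /row_free mxrank_col_mx_nsub // (eqP freeT) eqxx.
by rewrite (_ : (col_mx v T <= U)%MS) // col_mx_sub sVU.
Qed.

End FinFieldCounting.

Definition isotropic_mx (F : ringType) m l (Q : 'M[F]_m) (V : 'M[F]_(l, m)) :=
  V *m Q *m V^T == 0.

Lemma isotropic_col_mx (F : comRingType) m l (Q : 'M[F]_m) (v : 'rV[F]_m) (V : 'M[F]_(l, m)) :
  isotropic_mx Q (col_mx v V) -> isotropic_mx Q V /\ v *m (Q *m V^T) = 0.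
Proof.
rewrite /isotropic_mx mul_col_mx tr_col_mx mul_col_row -block_mx0.
by move=> /eqP/eq_block_mx[_ vQV0 _ /eqP VQV0]; rewrite mulmxA vQV0.
Qed.

Section IsotropicCount.
Variables (F : finFieldType) (m : nat) (Q : 'M[F]_m).
Hypothesis symQ : Q^T = Q.
Local Notation q := #|F|.
Local Notation k := (\rank (kermx Q)).

Let count_iso l (s : nat) :=
  #|[set V : 'M[F]_(l, m) | isotropic_mx Q V && (\rank (V *m Q) == s)]|.

(* Building [V] row by row, a row raising the rank of [V *m Q] to [i.+1] has at
   most [q ^ (m - i)] choices, and a row that does not raise it lies in
   [V + kermx Q]. *)
Let iso_exponent l s := (\sum_(i < s) (m - i) + (l - s) * (k + s))%N.

Lemma card_mulmx_submx_le l (V : 'M[F]_(l, m)) :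
  (#|[set v : 'rV[F]_m | (v *m Q <= V *m Q)%MS]| <= q ^ (k + \rank (V *m Q)))%N.
Proof.
apply: (@leq_trans #|[set v : 'rV[F]_m | (v <= V + kermx Q)%MS]|).
  apply: subset_leq_card; apply/subsetP => v; rewrite !inE => /submxP[w vQ].
  rewrite -[v](subrK (w *m V)) addrC addmx_sub_adds ?submxMl //.
  by rewrite sub_kermx mulmxBl vQ mulmxA subrr.
rewrite card_submx mul1n leq_exp2l ?card_finNzRing_gt1 //.
rewrite -(leq_add2r (\rank (V :&: kermx Q))) mxrank_sum_cap -addnA mxrank_mul_ker.
by rewrite addnC.
Qed.

Lemma card_orthogonal l (V : 'M[F]_(l, m)) :
  #|[set v : 'rV[F]_m | v *m (Q *m V^T) == 0]| = (q ^ (m - \rank (V *m Q)))%N.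
Proof.
have -> : [set v : 'rV[F]_m | v *m (Q *m V^T) == 0] = [set v | (v <= kermx (Q *m V^T))%MS].
  by apply/setP => v; rewrite !inE sub_kermx.
rewrite card_submx mul1n mxrank_ker.
by rewrite -mxrank_tr trmx_mul symQ trmxK.
Qed.

Lemma count_iso_gt l s : (l < s)%N -> count_iso l s = 0%N.
Proof.
move=> ltls; apply/eqP; rewrite cards_eq0; apply/eqP/setP => V; rewrite !inE.
by rewrite andbC; case: eqP => // rVQ; move: (rank_leq_row (V *m Q)); rewrite rVQ leqNgt ltls.
Qed.

Lemma isotropic_col_mx_rank_le l s (v : 'rV[F]_m) (V : 'M[F]_(l, m)) :
  ((isotropic_mx Q (col_mx v V) && (\rank (col_mx v V *m Q) == s) : nat) <=
   ((0 < s) && isotropic_mx Q V && (\rank (V *m Q) == s.-1)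
      && (v *m (Q *m V^T) == 0%R) : nat) +
   (isotropic_mx Q V && (\rank (V *m Q) == s) && (v *m Q <= V *m Q)%MS : nat))%N.
Proof.
case isoW: (isotropic_mx Q (col_mx v V)) => //=.
have [-> vQV0] := isotropic_col_mx isoW.
rewrite mul_col_mx vQV0 eqxx andbT /=.
have [svV | nsvV] := boolP (v *m Q <= V *m Q)%MS.
  by rewrite mxrank_col_mx_sub // !andbT leq_addl.
by rewrite mxrank_col_mx_nsub // andbF addn0; case: s.
Qed.

Lemma count_iso_succ l s :
  (count_iso l.+1 s <=
   (0 < s) * (count_iso l s.-1 * q ^ (m - s.-1)) + count_iso l s * q ^ (k + s))%N.
Proof.
rewrite /count_iso -sum1dep_card big_mkcond sum_nat_col_mx exchange_big /=.
apply: leq_trans.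
  by apply: leq_sum => V _; apply: leq_sum => v _; exact: isotropic_col_mx_rank_le.
rewrite /=; under eq_bigr => V _ do rewrite big_split /= !sum_nat_andb card_orthogonal.
rewrite big_split /=; apply: leq_add.
  rewrite mulnA -sum_nat_andb big_distrl /=; apply: leq_sum => V _.
  by rewrite andbA; case: andP => [[_ /eqP->] | _].
rewrite -sum1dep_card big_distrl [leqRHS]big_mkcond /=; apply: leq_sum => V _.
by case: andP => [[_ /eqP <-] | _]; rewrite ?mul1n ?card_mulmx_submx_le.
Qed.

Lemma iso_exponent_succ_rank l s : (iso_exponent l s + (m - s) <= iso_exponent l.+1 s.+1)%N.
Proof.
rewrite /iso_exponent big_ord_recr /= subSS -addnA [(_ * _ + _)%N]addnC addnA leq_add2l.
by rewrite leq_mul2l addnS ltnW ?orbT.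
Qed.

Lemma iso_exponent_succ l s : (s <= l)%N ->
  (iso_exponent l s + (k + s) = iso_exponent l.+1 s)%N.
Proof. by move=> lesl; rewrite /iso_exponent -addnA subSn // mulSn [(k + s + _)%N]addnC. Qed.

Lemma count_iso_le l s : (count_iso l s <= 2 ^ l * q ^ iso_exponent l s)%N.
Proof.
elim: l s => [|l IHl] s.
  rewrite mul1n (leq_trans (subset_leq_card (subsetT _))) // cardsT card_mx mul0n.
  by rewrite expn0 expn_gt0 (ltnW (card_finNzRing_gt1 F)).
apply: leq_trans (count_iso_succ l s) _.
case: s => [|s] /=.
  rewrite add0n -(iso_exponent_succ (leq0n l)) addn0 expnD expnS !mulnA leq_mul2r.
  by rewrite (leq_trans (IHl 0%N)) ?orbT // -mulnA leq_pmull.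
rewrite mul1n expnS mul2n -addnn mulnDl; apply: leq_add.
  apply: leq_trans (leq_mul (IHl s) (leqnn _)) _.
  rewrite -mulnA -expnD leq_mul2l leq_exp2l ?card_finNzRing_gt1 //.
  by rewrite iso_exponent_succ_rank orbT.
have [ltls | lesl] := ltnP l s.+1; first by rewrite count_iso_gt.
apply: leq_trans (leq_mul (IHl s.+1) (leqnn _)) _.
by rewrite -mulnA -expnD iso_exponent_succ.
Qed.

Lemma iso_exponent_le l s : (2 * l <= \rank Q)%N -> (s <= l)%N ->
  (iso_exponent l s <= \sum_(i < l) (m - i))%N.
Proof.
move=> le2lQ lesl; rewrite /iso_exponent -!(big_mkord xpredT (fun i => m - i)%N).
rewrite (big_cat_nat (leq0n s) lesl) /= leq_add2l -sum_nat_const_nat.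
rewrite big_nat_cond [leqRHS]big_nat_cond; apply: leq_sum => i /andP[/andP[lesi ltil] _].
have := rank_leq_row Q; rewrite mxrank_ker; lia.
Qed.

Lemma card_isotropic_le l : (2 * l <= \rank Q)%N ->
  (#|[set V : 'M[F]_(l, m) | isotropic_mx Q V]| <=
   l.+1 * (2 ^ l * q ^ (\sum_(i < l) (m - i))))%N.
Proof.
move=> le2lQ; rewrite -[l.+1]card_ord -sum_nat_const.
apply: (@leq_trans (\sum_(s < l.+1) count_iso l s)); last first.
  apply: leq_sum => s _; apply: leq_trans (count_iso_le l s) _.
  by rewrite leq_mul2l leq_exp2l ?card_finNzRing_gt1 ?iso_exponent_le ?orbT // -ltnS.
rewrite -sum1dep_card big_mkcond /count_iso.
under [leqRHS]eq_bigr => s _ do rewrite -sum1dep_card big_mkcond.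
rewrite exchange_big /=; apply: leq_sum => V _; case: ifP => // isoV.
have ltrl : (\rank (V *m Q) < l.+1)%N by rewrite ltnS rank_leq_row.
by rewrite (bigD1 (Ordinal ltrl)) //= eqxx.
Qed.

End IsotropicCount.

Definition sympl_mx {F : ringType} n : 'M[F]_(n + n) := block_mx 0 1%:M 1%:M 0.

Section Lagrangian.
Variables (F : fieldType) (n : nat).
Local Notation J := (sympl_mx n : 'M[F]_(n + n)).

Lemma tr_sympl_mx : J^T = J.
Proof. by rewrite /sympl_mx tr_block_mx !trmx0 trmx1. Qed.

Lemma sympl_mxK : J *m J = 1%:M.
Proof.
by rewrite /sympl_mx mulmx_block !(mul0mx, mulmx0, mul1mx, addr0, add0r) scalar_mx_block.
Qed.

Lemma row_free_sympl_mx : row_free J.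
Proof. by apply/row_freeP; exists J; exact: sympl_mxK. Qed.

Lemma lagrangian_annihilator_isotropic (A : 'M[F]_(n + n, n)) l (W : 'M[F]_(l, n + n)) :
  \rank A = n -> isotropic_mx J A^T -> W *m A = 0 -> isotropic_mx J W.
Proof.
rewrite /isotropic_mx trmxK => rankA /eqP isoA WA0.
have sAJ_ker : (A^T *m J <= kermx A)%MS by rewrite sub_kermx isoA.
have sker_AJ : (kermx A <= A^T *m J)%MS.
  have rank_AJ : \rank (A^T *m J) = n by rewrite mxrankMfree ?row_free_sympl_mx ?mxrank_tr.
  by rewrite -(mxrank_leqif_sup sAJ_ker) rank_AJ mxrank_ker rankA addnK.
have /submxP[X ->] : (W <= A^T *m J)%MS by rewrite (submx_trans _ sker_AJ) ?sub_kermx ?WA0.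
rewrite !trmx_mul tr_sympl_mx trmxK -!mulmxA (mulmxA J) sympl_mxK mul1mx.
by rewrite (mulmxA A^T) (mulmxA (A^T *m J)) isoA mul0mx mulmx0.
Qed.

End Lagrangian.

Lemma sympl_col (n : nat) (A : 'M['F_2]_(n + n, n)) i j :
  (A^T *m sympl_mx n *m A) i j = sympl (col i A) (col j A).
Proof.
rewrite -{1 2}[A]vsubmxK tr_col_mx /sympl_mx mul_row_block !(mulmx0, mulmx1, addr0, add0r).
rewrite mul_row_col !mxE -big_split /=; apply: eq_bigr => t _.
by rewrite !mxE addrC mulrC [_ * A _ j]mulrC.
Qed.

Lemma isotropicE (n : nat) (A : 'M['F_2]_(n + n, n)) :
  isotropic A = isotropic_mx (sympl_mx n) A^T.
Proof.
rewrite /isotropic_mx trmxK; apply/forallP/eqP => [isoA | isoA i].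
  by apply/matrixP => i j; rewrite sympl_col mxE; apply/eqP/(forallP (isoA i)).
by apply/forallP => j; rewrite -sympl_col isoA mxE.
Qed.

Lemma ln_le_subr1 (x : R) : 0 < x -> ln x <= x - 1.
Proof.
move=> x_gt0; have := exp_ineq1_le (ln x); rewrite exp_ln; last exact/RltP.
by rewrite RplusE R1E => /RleP; lra.
Qed.

Lemma lnM (x y : R) : 0 < x -> 0 < y -> ln (x * y) = ln x + ln y.
Proof. by move=> /RltP x_gt0 /RltP y_gt0; exact: ln_mult. Qed.

Lemma lnV (x : R) : 0 < x -> ln x^-1 = - ln x.
Proof. by move=> /RltP x_gt0; exact: ln_Rinv. Qed.

Lemma ler_ln (x y : R) : 0 < x -> x <= y -> ln x <= ln y.
Proof.
move=> x_gt0; rewrite le_eqVlt => /predU1P[-> // | /RltP lt_xy].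
by apply/ltW/RltP/ln_increasing => //; exact/RltP.
Qed.

(* Numerals of type [R] are Stdlib's [IZR] literals, hence the [n%:R] below. *)
Lemma IZR2 : IZR 2 = 2%:R :> R.
Proof. by rewrite -INRE. Qed.

Lemma ln2_gt0 : 0 < ln 2.
Proof.
rewrite -R0E -ln_1; apply/RltP/ln_increasing; apply/RltP.
  by rewrite R0E R1E ltr01.
by rewrite R1E IZR2 ltr1n.
Qed.

Lemma ln_exp2n (k : nat) : ln (2 ^ k)%:R = k%:R * ln 2.
Proof. by rewrite natrX -IZR2 -RpowE ln_pow ?INRE //; apply/RltP; rewrite IZR2 ltr0n. Qed.

Lemma log2_le_of_mul (K a b : nat) : (0 < K)%N -> (K * 2 ^ a <= 2 ^ b)%N ->
  log2 K%:R + a%:R <= b%:R.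
Proof.
move=> K_gt0 le_Ka_b.
have := @ler_ln (K * 2 ^ a)%N%:R (2 ^ b)%N%:R.
rewrite ltr0n muln_gt0 K_gt0 expn_gt0 ler_nat le_Ka_b => /(_ isT isT).
rewrite natrM lnM ?ltr0n ?expn_gt0 // !ln_exp2n => ln_le.
by rewrite /log2 -(ler_pM2r ln2_gt0) mulrDl mulfVK ?gt_eqF ?ln2_gt0.
Qed.

Definition entropy (T : finType) (p : T -> R) : R :=
  \sum_x (if p x == 0 then 0 else - (p x * log2 (p x))).

Lemma oppr_xlnx_le (p K : R) : 0 < p -> 0 < K -> - (p * ln p) <= p * ln K + (K^-1 - p).
Proof.
move=> p_gt0 K_gt0; have pK_gt0 : 0 < p * K by rewrite mulr_gt0.
have := @ln_le_subr1 (p * K)^-1; rewrite invr_gt0 lnV // lnM // => /(_ pK_gt0) ln_le.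
have -> : K^-1 - p = p * ((p * K)^-1 - 1) by field; rewrite !gt_eqF.
by rewrite -mulrN -mulrDr ler_pM2l //; lra.
Qed.

Lemma entropy_le_log2_card (T : finType) (p : T -> R) (S : {set T}) :
  (forall x, 0 <= p x) -> \sum_x p x = 1 -> (forall x, p x != 0 -> x \in S) ->
  entropy p <= log2 #|S|%:R.
Proof.
move=> p_ge0 sum_p1 supp_p; set K : R := #|S|%:R.
have K_gt0 : 0 < K.
  rewrite ltr0n card_gt0; apply: contraT => /negPn/eqP S0.
  move: sum_p1; rewrite big1 => [/eqP|x _]; first by rewrite eq_sym oner_eq0.
  by apply/eqP; apply: contraT => /supp_p; rewrite S0 inE.
have ln2_gt0 := ln2_gt0.
apply: (@le_trans _ _ (\sum_x (p x * log2 K + ((x \in S)%:R / K - p x) / ln 2))).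
  apply: ler_sum => x _; case: eqP => [-> | /eqP px_neq0].
    by rewrite mul0r add0r subr0 divr_ge0 ?divr_ge0 ?ler0n ?ltW.
  have px_gt0 : 0 < p x by rewrite lt0r px_neq0 p_ge0.
  rewrite supp_p // mul1r /log2 !mulrA -mulNr -mulrDl ler_pM2r ?invr_gt0 //.
  exact: oppr_xlnx_le.
rewrite big_split /= -mulr_suml sum_p1 mul1r -mulr_suml big_split /= sumrN sum_p1.
rewrite -mulr_suml -natr_sum.
have -> : (\sum_x ((x \in S) : nat))%N = #|S| by rewrite -sum1_card [RHS]big_mkcond.
by rewrite divff ?gt_eqF // subrr mul0r addr0.
Qed.

Lemma double_sum_subn (m y : nat) : (y <= m)%N ->
  (2 * \sum_(i < y) (m - i) + y * y = 2 * y * m + y)%N.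
Proof.
elim: y => [|y IHy] lt_ym; first by rewrite big_ord0.
rewrite big_ord_recr /=; have := IHy (ltnW lt_ym); set S := (\sum_(i < y) _)%N => IH; nia.
Qed.

Lemma excess_exponentE m n y : (n + y <= m)%N ->
  (2 * (y + y + \sum_(i < y) (m - i) + n * (m - y)) + y * y =
   2 * (n * m) + 7 * y + 2 * (y * (m - n).-1))%N.
Proof.
move=> le_nym; have := double_sum_subn (leq_trans (leq_addl n y) le_nym).
move: (\sum_(i < y) _)%N => S; move: le_nym => /subnKC <-; move: (m - (n + y))%N => k.
have -> : (n + y + k - y = n + k)%N by lia.
have -> : (n + y + k - n = y + k)%N by lia.
by case: y => [|y] /=; nia.
Qed.

Section ImageBA.
Variables (m n : nat) (B : 'M['F_2]_(m, n + n)).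

Definition image_BA := [set B *m A | A in IsoFR n].

Let QB := B *m sympl_mx n *m B^T.

Lemma tr_QB : QB^T = QB.
Proof. by rewrite /QB !trmx_mul trmxK tr_sympl_mx mulmxA. Qed.

Lemma mxrank_QB : (\rank B + \rank B - (n + n) <= \rank QB)%N.
Proof.
have rank_JB : \rank (sympl_mx n *m B^T) = \rank B.
  by rewrite (eqmxMfull _ (row_free_sympl_mx _ n)) mxrank_tr.
by have := mxrank_mul_min B (sympl_mx n *m B^T); rewrite rank_JB /QB mulmxA.
Qed.

Lemma image_BA_annihilator_isotropic M l (T : 'M['F_2]_(l, m)) :
  M \in image_BA -> T *m M = 0 -> isotropic_mx QB T.
Proof.
case/imsetP => A; rewrite inE isotropicE => /andP[/eqP rankA isoA] -> TBA0.
have := lagrangian_annihilator_isotropic rankA isoA (_ : (T *m B) *m A = 0).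
by rewrite -mulmxA TBA0 /isotropic_mx /QB trmx_mul !mulmxA => ->.
Qed.

Lemma card_image_BA_le_rank : (#|image_BA| <= 2 ^ (n * \rank B))%N.
Proof.
have <- : #|[set X^T | X in [set X : 'M['F_2]_(n, m) | (X <= B^T)%MS]]| =
          (2 ^ (n * \rank B))%N.
  by rewrite card_imset ?card_submx ?card_ord ?mxrank_tr //; exact: trmx_inj.
apply/subset_leq_card/subsetP => _ /imsetP[A _ ->]; apply/imsetP.
by exists (A^T *m B^T); rewrite ?inE ?submxMl // -trmx_mul trmxK.
Qed.

(* Double count the pairs [(M, T)] with [M] in the image and [T] row-free with
   [T *m M = 0]: each [M] has rank at most [n], and each such [T] is
   [QB]-isotropic and annihilates at most [2 ^ (n * (m - l))] matrices. *)
Lemma card_image_BA_le l : (l <= m - n)%N -> (2 * l <= \rank QB)%N ->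
  (#|image_BA| * 2 ^ (l * (m - n).-1) <=
   l.+1 * (2 ^ l * 2 ^ (\sum_(i < l) (m - i))) * 2 ^ (n * (m - l)))%N.
Proof.
move=> lel le2lQ; rewrite -sum_nat_const.
apply: (@leq_trans (\sum_(M in image_BA)
    #|[set T : 'M['F_2]_(l, m) | row_free T && (T <= kermx M)%MS]|)).
  apply: leq_sum => M _.
  have le_ker : (m - n <= \rank (kermx M))%N by rewrite mxrank_ker leq_sub2l ?rank_leq_col.
  have := card_row_free_submx (leq_trans lel le_ker); rewrite card_ord; apply: leq_trans.
  by rewrite leq_exp2l // leq_mul2l -!subn1 leq_sub2r ?orbT.
under eq_bigr => M _ do rewrite -sum1dep_card big_mkcond.
rewrite exchange_big /=.
apply: (@leq_trans (\sum_(T : 'M['F_2]_(l, m))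
    (row_free T && isotropic_mx QB T) * 2 ^ (n * (m - l)))); last first.
  rewrite -big_distrl leq_mul2r /=; apply/orP; right.
  have := card_isotropic_le tr_QB le2lQ; rewrite card_ord; apply: leq_trans.
  rewrite -sum1dep_card [leqRHS]big_mkcond; apply: leq_sum => T _.
  by case: (row_free T).
apply: leq_sum => T _.
have [freeT | _] := boolP (row_free T); last by rewrite big1.
have [isoT | notisoT] := boolP (isotropic_mx QB T); last first.
  rewrite big1 // => M imM; rewrite sub_kermx.
  by case: eqP => // /(image_BA_annihilator_isotropic imM); rewrite (negbTE notisoT).
have := card_mulmx_eq0 n T; rewrite card_ord (eqP freeT) mul1n => <-.
rewrite -sum1dep_card [leqRHS]big_mkcond [leqLHS]big_mkcond /=.
by apply: leq_sum => M _; case: ifP; rewrite // sub_kermx.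
Qed.

Lemma col_mx1_IsoFR : col_mx 1%:M 0 \in IsoFR n.
Proof.
rewrite inE rank_col_mx0 mxrank1 eqxx isotropicE /isotropic_mx trmxK tr_col_mx trmx1 trmx0.
rewrite /sympl_mx mul_row_block !(mulmx0, mul0mx, mulmx1, mul1mx, addr0, add0r).
by rewrite mul_row_col mul1mx mulmx1 addr0 eqxx.
Qed.

Lemma card_image_BA_gt0 : (0 < #|image_BA|)%N.
Proof. by apply/card_gt0P; exists (B *m col_mx 1%:M 0); exact/imset_f/col_mx1_IsoFR. Qed.

Lemma prob_BA_ge0 M : 0 <= prob_BA B M.
Proof. by rewrite divr_ge0 ?ler0n. Qed.

Lemma sum_prob_BA : \sum_M prob_BA B M = 1.
Proof.
have card_fibers : (\sum_M #|[set A in IsoFR n | B *m A == M]| = #|IsoFR n|)%N.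
  rewrite -sum1_card (partition_big (mulmx B) xpredT) //=.
  by apply: eq_bigr => M _; rewrite sum1dep_card.
rewrite -mulr_suml -natr_sum card_fibers divff // pnatr_eq0 -lt0n.
by apply/card_gt0P; exists (col_mx 1%:M 0); exact: col_mx1_IsoFR.
Qed.

Lemma prob_BA_neq0 M : prob_BA B M != 0 -> M \in image_BA.
Proof.
apply: contraR => notM; rewrite /prob_BA (_ : [set A in IsoFR n | B *m A == M] = set0).
  by rewrite cards0 mul0r.
apply/setP => A; rewrite !inE; apply: contraNF notM => /andP[isoA /eqP <-].
by apply/imsetP; exists A; rewrite ?inE.
Qed.

Lemma entropy_BA_le_log2_image : entropy_BA B <= log2 #|image_BA|%:R.
Proof. exact: entropy_le_log2_card prob_BA_ge0 sum_prob_BA prob_BA_neq0. Qed.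

Lemma entropy_BA_le_rank : entropy_BA B <= (n * \rank B)%:R.
Proof.
apply: le_trans entropy_BA_le_log2_image _.
have := @log2_le_of_mul _ 0 _ card_image_BA_gt0; rewrite muln1 addr0.
by apply; exact: card_image_BA_le_rank.
Qed.

Lemma entropy_BA_le_excess y : (n + y <= \rank B)%N ->
  entropy_BA B *+ 2 + (y * y)%:R <= (2 * (n * m) + 7 * y)%:R.
Proof.
move=> le_ny_r; have le_rm := rank_leq_row B.
have le_y : (y <= m - n)%N by lia.
have le_2y : (2 * y <= \rank QB)%N by have := mxrank_QB; lia.
set E1 := (y * (m - n).-1)%N; set E2 := (y + y + \sum_(i < y) (m - i) + n * (m - y))%N.
have card_le : (#|image_BA| * 2 ^ E1 <= 2 ^ E2)%N.
  apply: leq_trans (card_image_BA_le le_y le_2y) _.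
  rewrite /E2 !expnD !mulnA.
  by do 3!apply: leq_mul => //; exact: ltn_expl.
have log2_le := log2_le_of_mul card_image_BA_gt0 card_le.
have := excess_exponentE (leq_trans le_ny_r le_rm); rewrite -/E1 -/E2; clearbody E1 E2.
move/(congr1 (GRing.natmul (1 : R))); rewrite !natrD !natrM => exponentE.
have := entropy_BA_le_log2_image; lra.
Qed.

End ImageBA.

(* [Y := \rank B - n] exceeds [(c - 1) n / 2 >= 14] and [m <= 4 n], so that
   [2 d m n + 7 Y <= Y ^ 2]. *)
Lemma entropy_BA_le_of_large_rank m n (B : 'M['F_2]_(m, n + n)) (c d : R) :
  0 < d -> d *+ 2 <= 1 -> (d * c) *+ 2 <= c - 1 -> d *+ 64 <= (c - 1) ^+ 2 ->
  28%:R <= (c - 1) * n%:R -> c * n%:R <= m%:R -> (1 - d) * m%:R < (\rank B)%:R ->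
  entropy_BA B <= (1 - d) * (m * n)%:R.
Proof.
move=> d_gt0 d_le dc_le d_le_e2 e_n c_n rank_gt.
have le_r2n : (\rank B)%:R <= n%:R + n%:R :> R by rewrite -natrD ler_nat rank_leq_col.
have cn_le : (1 - d) * (c * n%:R) <= (1 - d) * m%:R by rewrite ler_wpM2l //; lra.
have dcN : (d * c * n%:R) *+ 2 <= (c - 1) * n%:R by rewrite -mulrnAl ler_wpM2r.
have Y_gt : (c - 1) * n%:R / 2%:R < (\rank B)%:R - n%:R by lra.
have lt_nr : (n < \rank B)%N by rewrite -(ltr_nat R); nra.
have := @entropy_BA_le_excess _ _ B (\rank B - n).
rewrite subnKC ?(ltnW lt_nr) // => /(_ (leqnn _)).
rewrite !natrD !natrM natrB ?(ltnW lt_nr) //.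
set Y := (\rank B)%:R - n%:R in Y_gt *.
set N := (n%:R : R) in e_n c_n cn_le le_r2n Y_gt *; have N_ge0 : 0 <= N by [].
set M := (m%:R : R) in c_n cn_le rank_gt *.
have M_le : M <= N *+ 4 by nra.
have Y7 : Y *+ 14 <= Y * Y by nra.
have dMN : d * (M * N) <= d * (N * N) *+ 4.
  rewrite -mulrnAr; apply: ler_wpM2l; first exact: ltW.
  by rewrite -mulrnAr [M * N]mulrC; apply: ler_wpM2l.
have dNN : d * (N * N) *+ 64 <= ((c - 1) * N) ^+ 2.
  by rewrite exprMn -mulrnAl; apply: ler_wpM2r; rewrite ?sqr_ge0.
have eY : ((c - 1) * N) ^+ 2 <= (Y *+ 2) ^+ 2 by rewrite ler_sqr ?nnegrE; lra.
nra.
Qed.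

Theorem theoremD1 (c : R) (m : nat -> nat) :
  1 < c ->
  (forall n : nat, c * n%:R <= (m n)%:R) ->
  exists d : R, 0 < d /\
    exists n0 : nat, forall n : nat, (n0 <= n)%N ->
      forall B : 'M['F_2]_(m n, n + n),
        entropy_BA B <= (1 - d) * ((m n) * n)%:R.
Proof.
move=> c_gt1 le_cm; have c_gt0 : 0 < c := lt_trans ltr01 c_gt1.
have e_gt0 : 0 < c - 1 by rewrite subr_gt0.
pose t := (c - 1) / c; pose d := t ^+ 2 / 64%:R.
have t_gt0 : 0 < t by rewrite divr_gt0.
have tc : t * c = c - 1 by rewrite mulfVK ?gt_eqF.
have d64 : d *+ 64 = t * t by rewrite /d -mulr_natr mulfVK ?pnatr_eq0.
have d_gt0 : 0 < d by rewrite divr_gt0 ?exprn_gt0.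
have dc64 : (d * c) *+ 64 = t * (c - 1) by rewrite -mulrnAl d64 -tc mulrA.
have t_le1 : t <= 1 by rewrite ler_pdivrMr // mul1r; lra.
have t_le_e : t <= c - 1 by rewrite ler_pdivrMr //; nra.
exists d; split => //; exists (Num.bound (28%:R / (c - 1))) => n le_n0 B.
have e_n : 28%:R <= (c - 1) * n%:R.
  rewrite mulrC -ler_pdivrMr //; apply/ltW/(lt_le_trans (archi_boundP _)).
    by rewrite divr_ge0 ?ltW.
  by rewrite ler_nat.
have [small | large] := lerP (\rank B)%:R ((1 - d) * (m n)%:R).
  apply: le_trans (entropy_BA_le_rank B) _.
  by rewrite !natrM mulrC mulrA; apply: ler_wpM2r.
apply: entropy_BA_le_of_large_rank large => //; [nra | nra | rewrite expr2; nra | exact: e_n].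
Qed.
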